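(* For every $q\ge0$, the $W(m,n)$-module $\mathcal V(\theta_q)$ is generated by the single vector $y_n\otimes(e^*_{m+n})^q\otimes1_{\mathcal E}$.
   Context: $\mathbb F$ algebraically closed of characteristic $0$, $m,n\ge1$. $\mathcal R=\mathbb F[x_1,\dots,x_m]\otimes\Lambda(y_1,\dots,y_n)$ ($x_i$ even, $y_s$ odd). $\mathfrak g=W(m,n)$ the Lie superalgebra of superderivations of $\mathcal R$, free over $\mathcal R$ on even $\partial_i$ and odd $D_t$, with $\mathfrak g_0\cong\mathfrak{gl}(m|n)$ via $x_i\partial_j\mapsto E_{ij}$, $x_iD_s\mapsto E_{i,m+s}$, $y_r\partial_j\mapsto E_{m+r,j}$, $y_rD_s\mapsto E_{m+r,m+s}$; weights $\epsilon_i,\delta_s$ as usual. $\mathcal E=\sum_{i=1}^m\epsilon_i-\sum_{j=1}^n\delta_j$ and $\theta_q=\mathcal E-q\delta_n$. $V^*$ is the dual of the natural module $V=\mathbb F^{m|n}$ with dual basis $e^*_i$ ($e_i^*$ even iff $i\le m$), action $(X.f)(v)=-(-1)^{\wp(X)\wp(f)}f(Xv)$; $\Omega^q(V^* )$ its $q$-th super-Grassmann power (tensor algebra modulo $u\otimes w+(-1)^{\wp(u)\wp(w)}w\otimes u$); $\mathbb F_{\mathcal E}=\mathbb F1_{\mathcal E}$ the one-dimensional $\mathfrak{gl}(m|n)$-module of weight $\mathcal E$. Then $L^0(\theta_q)=\Omega^q(V^* )\otimes\mathbb F_{\mathcal E}$ is irreducible of highest weight $\theta_q$. $\mathcal V(\theta_q)=\mathcal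 R\otimes L^0(\theta_q)$ is the mixed-product module with action (homogeneous $f,g$, $\xi$ the $\mathfrak g_0$-action): $f\partial_i.(g\otimes v)=f\partial_i(g)\otimes v+\sum_j\partial_j(f)g\otimes\xi(x_j\partial_i)v+(-1)^{\wp(f)+\wp(g)+1}\sum_jD_j(f)g\otimes\xi(y_j\partial_i)v$, $fD_i.(g\otimes v)=fD_i(g)\otimes v+(-1)^{\wp(g)}\sum_j\partial_j(f)g\otimes\xi(x_jD_i)v+(-1)^{\wp(f)+1}\sum_jD_j(f)g\otimes\xi(y_jD_i)v$. *)

From HB Require Import structures.
From mathcomp Require Import all_boot all_order all_algebra.
From mathcomp Require Import finmap.
From mathcomp Require Import monalg.

Set Implicit Arguments.
Unset Strict Implicit.
Unset Printing Implicit Defensive.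

Import GRing.Theory.
Local Open Scope ring_scope.

Section WmnModule.
Variables (F : fieldType) (m n q : nat).

(* The superalgebra R = F[x_1..x_m] (x) Lambda(y_1..y_n).                  *)
(* Basis monomial (a, S) stands for x^a * y_{s_1} y_{s_2} ... y_{s_k}      *)
(* with s_1 < s_2 < ... < s_k the elements of S (indices are 0-based:      *)
(* x_{i+1} <-> i : 'I_m, y_{s+1} <-> s : 'I_n).                            *)
Definition Rmon := ({ffun 'I_m -> nat} * {set 'I_n})%type.

Definition Rpar (f : Rmon) : bool := odd #|f.2|.

Definition Rterm := (F * Rmon)%type.

(* product of basis monomials, with the supercommutation sign *)
Definition Rmul (f g : Rmon) : Rterm :=
  (if [disjoint f.2 & g.2] then
     (-1) ^+ #|[set st : 'I_n * 'I_n |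
                 (st.1 \in f.2) && (st.2 \in g.2) && (st.2 < st.1)%N]|
   else 0,
   ([ffun i => f.1 i + g.1 i], f.2 :|: g.2)).

Definition lmulR (f : Rmon) (r : Rterm) : Rterm :=
  let s := Rmul f r.2 in (r.1 * s.1, s.2).
Definition rmulR (r : Rterm) (g : Rmon) : Rterm :=
  let s := Rmul r.2 g in (r.1 * s.1, s.2).

Definition Rdx (i : 'I_m) (g : Rmon) : Rterm :=
  ((g.1 i)%:R, ([ffun k => if k == i then (g.1 k).-1 else g.1 k], g.2)).

(* the odd (left) superderivation D_j = d/dy_j *)
Definition RDy (j : 'I_n) (g : Rmon) : Rterm :=
  (if j \in g.2 then (-1) ^+ #|[set s in g.2 | (s < j)%N]| else 0,
   (g.1, g.2 :\ j)).

(* Tensor power (V^* )^{(x) q}: basis words e^*_{w_1} (x) ... (x) e^*_{w_q}. *)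
(* Index c : 'I_(m+n) stands for e^*_{c+1}; it is odd iff m <= c.          *)
Definition word := (q.-tuple 'I_(m + n))%type.
Definition ipar (c : 'I_(m + n)) : bool := (m <= c)%N.

(* The space R (x) (V^* )^{(x) q} (x) F_E, with basis Rmon x word.          *)
Definition Kb := (Rmon * word)%type.
Definition Vsp := {malg F[Kb]}.

Definition bvec (c : F) (g : Rmon) (w : word) : Vsp := << c *g (g, w) >>.

(* supertrace: the weight E = sum eps_i - sum delta_j evaluated on E_ab *)
Definition str (a b : 'I_(m + n)) : F :=
  if a == b then (if ipar a then -1 else 1) else 0.

Definition wset (w : word) (k : 'I_q) (b : 'I_(m + n)) : word :=
  [tuple if j == k then b else tnth w j | j < q].

(* action xi(E_ab) of gl(m|n) on (V^* )^{(x) q} (x) F_E, applied to the  *)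
(* R-factor r (x) w.  E_ab . e^*_c = - (-1)^{p(E_ab) p(c)} delta_ac e^*_b  *)
(* (from (X.f)(v) = -(-1)^{p(X)p(f)} f(Xv)), extended to the tensor power *)
(* with the Koszul sign, plus the character E (the supertrace).            *)
Definition xiV (a b : 'I_(m + n)) (r : Rterm) (w : word) : Vsp :=
  r.1 *:
  (\sum_(k < q)
     (if tnth w k == a then
        bvec ((-1) ^+ ((ipar a (+) ipar b) &&
                       odd (\sum_(l < q | (l < k)%N) ipar (tnth w l)))
              * (- (-1) ^+ ((ipar a (+) ipar b) && ipar a)))
             r.2 (wset w k b)
      else 0)
   + bvec (str a b) r.2 w).

Definition xI (i : 'I_m) : 'I_(m + n) := lshift n i.
Definition yI (s : 'I_n) : 'I_(m + n) := rshift m s.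

(* The mixed-product action of f d_i (f a basis monomial) on g (x) w. *)
Definition actd_b (f : Rmon) (i : 'I_m) (k : Kb) : Vsp :=
  let g := k.1 in let w := k.2 in
  let t1 := lmulR f (Rdx i g) in
  bvec t1.1 t1.2 w
  + \sum_(j < m) xiV (xI j) (xI i) (rmulR (Rdx j f) g) w
  + (-1) ^+ (Rpar f + Rpar g + 1)
    *: \sum_(j < n) xiV (yI j) (xI i) (rmulR (RDy j f) g) w.

(* The mixed-product action of f D_i (f a basis monomial) on g (x) w. *)
Definition actD_b (f : Rmon) (i : 'I_n) (k : Kb) : Vsp :=
  let g := k.1 in let w := k.2 in
  let t1 := lmulR f (RDy i g) in
  bvec t1.1 t1.2 w
  + (-1) ^+ (Rpar g)
    *: \sum_(j < m) xiV (xI j) (yI i) (rmulR (Rdx j f) g) w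
  + (-1) ^+ (Rpar f + 1)
    *: \sum_(j < n) xiV (yI j) (yI i) (rmulR (RDy j f) g) w.

Definition linext (op : Kb -> Vsp) (v : Vsp) : Vsp :=
  \sum_(k <- msupp v) v@_k *: op k.

Definition actd (f : Rmon) (i : 'I_m) : Vsp -> Vsp := linext (actd_b f i).
Definition actD (f : Rmon) (i : 'I_n) : Vsp -> Vsp := linext (actD_b f i).

(* Spanning set of R (x) K, K = kernel of (V^* )^{(x) q} -> Omega^q(V^* ):  *)
(* g (x) (a (x) (u (x) w + (-1)^{p(u)p(w)} w (x) u) (x) b).               *)
Definition wswap (w : word) (k l : 'I_q) : word :=
  [tuple tnth w (if j == k then l else if j == l then k else j) | j < q].

Definition kerel (g : Rmon) (w : word) (k l : 'I_q) : Vsp :=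
  bvec 1 g w
  + bvec ((-1) ^+ (ipar (tnth w k) && ipar (tnth w l))) g (wswap w k l).

(* W(m,n) is spanned by the f d_i, f D_i with f a basis monomial.          *)
Definition W_stable_subspace (P : Vsp -> Prop) : Prop :=
  [/\ P 0,
      (forall u v, P u -> P v -> P (u + v)),
      (forall (c : F) u, P u -> P (c *: u)),
      (forall f i u, P u -> P (actd f i u)) &
      (forall f i u, P u -> P (actD f i u))].

(* V(theta_q) = R (x) Omega^q(V^* ) (x) F_E is the quotient of Vsp by R (x) K.
   [v0] generates the quotient module iff every W(m,n)-stable subspace of
   Vsp containing R (x) K and v0 is the whole space.                        *)
Definition generates_Vtheta (v0 : Vsp) : Prop :=
  forall P : Vsp -> Prop,
    W_stable_subspace P ->
    (forall g w (k l : 'I_q), val l = (val k).+1 -> P (kerel g w k l)) ->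
    P v0 -> forall v, P v.

End WmnModule.

(* the index m+n (0-based: m+n-1), i.e. e^*_{m+n} *)
Definition lastI (m n : nat) (Hn : (0 < n)%N) : 'I_(m + n) :=
  Ordinal (eq_leq (prednK (ltn_addl m Hn))
           : ((m + n).-1 < m + n)%N).

Definition gen_vec (F : fieldType) (m n q : nat) (Hn : (0 < n)%N)
  : Vsp F m n q :=
  bvec 1 ([ffun => 0%N], [set s : 'I_n | val s == n.-1])
       [tuple of nseq q (lastI m Hn)].

From Pilot Require Import Defs.
From HB Require Import structures.
From mathcomp Require Import all_boot all_order all_algebra.
From mathcomp Require Import finmap monalg.

(* Let P be a W(m,n)-stable subspace containing the super-antisymmetry
   relations and v0 = y_n (x) c^q, where c = e^*_{m+n} is odd.  Applying D_n
   and then the operators x_i y_s d_i produces every y_S (x) c^q; the operator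
   x_i^(k+1) d_i multiplies a vector free of x_i by (k+1) x_i^k, which is
   invertible in characteristic 0, so every g (x) c^q lies in P.  A general
   word w = c^k b ... is reached by descending induction on the length k of
   its c-prefix: on g (x) w[k := c], the operator y_n d_i or y_n D_s (according
   to b) acts as xi(E_cb) modulo P, replacing one letter c by b.  Replacements
   after position k have a longer c-prefix, and by the antisymmetry relations
   the replacement at position t <= k is (-(-1)^p(b))^(k-t) g (x) w; the signs
   add up to (k+1) times a unit, which puts g (x) w in P. *)

Set Implicit Arguments.
Unset Strict Implicit.
Unset Printing Implicit Defensive.

Import GRing.Theory.
Local Open Scope ring_scope.

Section Monomials.
Variables (F : fieldType) (m n : nat).
Local Notation Rmon := (Rmon m n).

Definition Rone : Rmon := ([ffun => 0%N], set0).
Definition ymon (s : 'I_n) : Rmon := ([ffun => 0%N], [set s]).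
Definition xpow (i : 'I_m) (k : nat) : Rmon :=
  ([ffun j => if j == i then k else 0%N], set0).
Definition xymon (i : 'I_m) (s : 'I_n) : Rmon :=
  ([ffun j => if j == i then 1%N else 0%N], [set s]).

Lemma Rmul_evenl (a : {ffun 'I_m -> nat}) (g : Rmon) :
  Rmul F (a, set0) g = (1, ([ffun k => a k + g.1 k], g.2)).
Proof.
case: g => b S; rewrite /Rmul /=.
have -> : [disjoint set0 & S] by apply/pred0P => x; rewrite !inE.
have -> : [set st : 'I_n * 'I_n | (st.1 \in set0) && (st.2 \in S)
                                  & (st.2 < st.1)%N] = set0.
  by apply/setP => x; rewrite !inE.
by rewrite cards0 expr0 set0U.
Qed.

Lemma Rmul1 (g : Rmon) : Rmul F Rone g = (1, g).
Proof.
rewrite Rmul_evenl; case: g => a S; congr (_, (_, _)).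
by apply/ffunP => i; rewrite !ffunE.
Qed.

Lemma rmulR_evenl (c : F) (a : {ffun 'I_m -> nat}) (g : Rmon) :
  rmulR (c, (a, set0)) g = (c, ([ffun k => a k + g.1 k], g.2)).
Proof. by rewrite /rmulR Rmul_evenl mulr1. Qed.

Lemma rmulR_coef0 (r : Rterm F m n) (g : Rmon) : r.1 = 0 -> (rmulR r g).1 = 0.
Proof. by rewrite /rmulR => ->; rewrite mul0r. Qed.

Lemma Rmul_ymon (s : 'I_n) (a : {ffun 'I_m -> nat}) (S : {set 'I_n}) :
  s \notin S -> exists2 e : F, e != 0 & Rmul F (ymon s) (a, S) = (e, (a, s |: S)).
Proof.
move=> sS; rewrite /Rmul /ymon /= disjoints1 sS.
have -> : [ffun i => [ffun=> 0%N] i + a i] = a by apply/ffunP => i; rewrite !ffunE.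
by eexists; last reflexivity; rewrite signr_eq0.
Qed.

Lemma RDy_ymon (s : 'I_n) : RDy F s (ymon s) = (1, Rone).
Proof.
rewrite /RDy /ymon /Rone /= set11 setDv.
have -> : [set s0 in [set s] | (s0 < s)%N] = set0.
  by apply/setP => x; rewrite !inE; case: eqP => // ->; rewrite ltnn.
by rewrite cards0 expr0.
Qed.

Lemma RDy_ymon_neq (s j : 'I_n) : j != s -> (RDy F j (ymon s)).1 = 0.
Proof. by move=> ne; rewrite /RDy /ymon /= inE (negPf ne). Qed.

Lemma Rdx_ymon (s : 'I_n) (j : 'I_m) : (Rdx F j (ymon s)).1 = 0.
Proof. by rewrite /Rdx /ymon /= ffunE. Qed.

Lemma Rdx_xpow (i : 'I_m) (k : nat) : Rdx F i (xpow i k.+1) = (k.+1%:R, xpow i k).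
Proof.
rewrite /Rdx /xpow ffunE eqxx; congr (_, (_, _)).
by apply/ffunP => l; rewrite !ffunE; case: eqP.
Qed.

Lemma Rdx_xymon (i : 'I_m) (s : 'I_n) : Rdx F i (xymon i s) = (1, ymon s).
Proof.
rewrite /Rdx /xymon /ymon ffunE eqxx; congr (_, (_, _)).
by apply/ffunP => l; rewrite !ffunE; case: eqP.
Qed.

End Monomials.

Section Action.
Variables (F : fieldType) (m n q : nat).
Local Notation V := (Vsp F m n q).
Local Notation Rmon := (Rmon m n).
Local Notation word := (word m n q).

Lemma bvec0 (g : Rmon) (w : word) : bvec (0 : F) g w = 0.
Proof. exact: (@monalgU0 (Kb m n q) F (g, w)). Qed.

Lemma bvecZ (c : F) (g : Rmon) (w : word) : bvec c g w = c *: bvec 1 g w.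
Proof.
apply/malgP => k; rewrite /bvec mcoeffZ [LHS]mcoeffU [in RHS]mcoeffU.
by case: eqP => _; rewrite ?mulr1 ?mulr0.
Qed.

Lemma linext_bvec (op : Kb m n q -> V) (g : Rmon) (w : word) :
  linext op (bvec 1 g w) = op (g, w).
Proof.
by rewrite /linext /bvec msuppU oner_eq0 big_seq_fset1 mcoeffUU scale1r.
Qed.

Lemma yI_neq_xI (s : 'I_n) (i : 'I_m) : yI m s != xI n i.
Proof.
apply/negP => /eqP/(congr1 val) /= E.
by have := ltn_ord i; rewrite -E ltnNge leq_addr.
Qed.

Lemma ipar_yI (s : 'I_n) : ipar (yI m s).
Proof. by rewrite /ipar /= leq_addr. Qed.

Lemma str_xI (i : 'I_m) : @str F m n (xI n i) (xI n i) = 1.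
Proof. by rewrite /str eqxx /ipar /= leqNgt ltn_ord. Qed.

Lemma str_neq (a b : 'I_(m + n)) : a != b -> @str F m n a b = 0.
Proof. by rewrite /str => /negPf ->. Qed.

Lemma xiV_coef0 (a b : 'I_(m + n)) (r : Rterm F m n) (w : word) :
  r.1 = 0 -> xiV a b r w = 0.
Proof. by rewrite /xiV => ->; rewrite scale0r. Qed.

Lemma xiV_notin (a b : 'I_(m + n)) (r : Rterm F m n) (w : word) :
  (forall t, tnth w t != a) -> xiV a b r w = r.1 *: bvec (@str F m n a b) r.2 w.
Proof. by move=> wa; rewrite /xiV big1 ?add0r // => t _; rewrite (negPf (wa t)). Qed.

Lemma actd_ymon (s : 'I_n) (i : 'I_m) (g : Rmon) (w : word) :
  actd (ymon m s) i (bvec 1 g w) =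
  bvec (lmulR (ymon m s) (Rdx F i g)).1 (lmulR (ymon m s) (Rdx F i g)).2 w
  + (-1) ^+ (Rpar (ymon m s) + Rpar g + 1) *: xiV (yI m s) (xI n i) (1, g) w.
Proof.
rewrite /actd linext_bvec /actd_b.
rewrite [X in _ + X + _]big1 ?addr0; last first.
  by move=> j _; rewrite xiV_coef0 // rmulR_coef0 // Rdx_ymon.
congr (_ + _ *: _).
rewrite (bigD1 s) // big1 ?addr0; last first.
  by move=> j ne; rewrite xiV_coef0 // rmulR_coef0 // RDy_ymon_neq.
by rewrite RDy_ymon /rmulR Rmul1 /= mul1r addr0.
Qed.

Lemma actD_ymon (s i : 'I_n) (g : Rmon) (w : word) :
  actD (ymon m s) i (bvec 1 g w) =
  bvec (lmulR (ymon m s) (RDy F i g)).1 (lmulR (ymon m s) (RDy F i g)).2 w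
  + (-1) ^+ (Rpar (ymon m s) + 1) *: xiV (yI m s) (yI m i) (1, g) w.
Proof.
rewrite /actD linext_bvec /actD_b.
rewrite [X in _ + _ *: X + _]big1 ?scaler0 ?addr0; last first.
  by move=> j _; rewrite xiV_coef0 // rmulR_coef0 // Rdx_ymon.
congr (_ + _ *: _).
rewrite (bigD1 s) // big1 ?addr0; last first.
  by move=> j ne; rewrite xiV_coef0 // rmulR_coef0 // RDy_ymon_neq.
by rewrite RDy_ymon /rmulR Rmul1 /= mul1r addr0.
Qed.

Lemma actD_Rone_ymon (s : 'I_n) (w : word) :
  actD (Rone m n) s (bvec (1 : F) (ymon m s) w) = bvec 1 (Rone m n) w.
Proof.
rewrite /actD linext_bvec /actD_b.
rewrite [X in _ + _ *: X + _]big1 ?scaler0 ?addr0; last first.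
  by move=> j _; rewrite xiV_coef0 // rmulR_coef0 // /Rdx /Rone /= ffunE.
rewrite [X in _ + _ *: X]big1 ?scaler0 ?addr0; last first.
  by move=> j _; rewrite xiV_coef0 // rmulR_coef0 // /RDy /Rone /= inE.
by rewrite RDy_ymon /lmulR Rmul1 /= mulr1.
Qed.

Lemma actd_xpow (i : 'I_m) (k : nat) (g : Rmon) (w : word) :
  g.1 i = 0%N -> (forall t, tnth w t != xI n i) ->
  actd (xpow n i k.+1) i (bvec (1 : F) g w) =
  k.+1%:R *: bvec 1 ([ffun j => (if j == i then k else 0%N) + g.1 j], g.2) w.
Proof.
move=> gi wi; rewrite /actd linext_bvec /actd_b.
have -> : (lmulR (xpow n i k.+1) (Rdx F i g)).1 = 0 by rewrite /lmulR /Rdx /= gi mul0r.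
rewrite bvec0 add0r.
rewrite [X in _ + _ *: X]big1 ?scaler0 ?addr0; last first.
  by move=> j _; rewrite xiV_coef0 // rmulR_coef0 // /RDy /xpow /= inE.
rewrite (bigD1 i) // big1 ?addr0; last first.
  move=> j ne; rewrite xiV_coef0 // rmulR_coef0 // /Rdx /xpow /= ffunE.
  by rewrite (negPf ne).
rewrite /= addr0 (xiV_notin _ _ wi) str_xI Rdx_xpow rmulR_evenl.
under eq_ffun => l do rewrite ffunE.
reflexivity.
Qed.

Lemma actd_xymon (i : 'I_m) (s : 'I_n) (g : Rmon) (w : word) :
  g.1 i = 0%N -> (forall t, tnth w t != xI n i) -> (forall t, tnth w t != yI m s) ->
  actd (xymon i s) i (bvec (1 : F) g w) =
  (Rmul F (ymon m s) g).1 *: bvec 1 (Rmul F (ymon m s) g).2 w.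
Proof.
move=> gi wi ws; rewrite /actd linext_bvec /actd_b.
have -> : (lmulR (xymon i s) (Rdx F i g)).1 = 0 by rewrite /lmulR /Rdx /= gi mul0r.
rewrite bvec0 add0r.
rewrite [X in _ + _ *: X]big1 ?scaler0 ?addr0; last first.
  move=> j _; have [->|ne] := eqVneq j s.
    by rewrite (xiV_notin _ _ ws) str_neq ?yI_neq_xI // bvec0 scaler0.
  by rewrite xiV_coef0 // rmulR_coef0 // /RDy /xymon /= inE (negPf ne).
rewrite (bigD1 i) // big1 ?addr0; last first.
  move=> j ne; rewrite xiV_coef0 // rmulR_coef0 // /Rdx /xymon /= ffunE.
  by rewrite (negPf ne).
by rewrite /= addr0 (xiV_notin _ _ wi) str_xI Rdx_xymon /rmulR mul1r -bvecZ.
Qed.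

Lemma tnth_wset (w : word) (k : 'I_q) (b : 'I_(m + n)) (j : 'I_q) :
  tnth (wset w k b) j = if j == k then b else tnth w j.
Proof. by rewrite tnth_mktuple. Qed.

Lemma tnth_wswap (w : word) (k l j : 'I_q) :
  tnth (wswap w k l) j = tnth w (if j == k then l else if j == l then k else j).
Proof. by rewrite tnth_mktuple. Qed.

Lemma wsetK (w : word) (k : 'I_q) (c : 'I_(m + n)) :
  wset (wset w k c) k (tnth w k) = w.
Proof. by apply: eq_from_tnth => j; rewrite !tnth_wset; case: eqP => [->|]. Qed.

Lemma wswap_wset (w : word) (t t' : 'I_q) (b : 'I_(m + n)) :
  tnth w t = tnth w t' -> wswap (wset w t b) t t' = wset w t' b.
Proof.
move=> wtt'; apply: eq_from_tnth => j; rewrite tnth_wswap.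
have [->|jt] := eqVneq j t.
  by rewrite !tnth_wset [t' == t]eq_sym; case: eqP => // _; rewrite wtt'.
have [->|jt'] := eqVneq j t'; first by rewrite !tnth_wset !eqxx.
by rewrite !tnth_wset (negPf jt) (negPf jt').
Qed.

End Action.

Section StableSubspace.
Variables (F : fieldType) (m n q : nat).
Local Notation V := (Vsp F m n q).
Variable P : V -> Prop.
Hypothesis stableP : W_stable_subspace P.

Lemma stable0 : P 0.
Proof. by case: stableP. Qed.

Lemma stableD u v : P u -> P v -> P (u + v).
Proof. by case: stableP => _ H *; apply: H. Qed.

Lemma stableZ (c : F) u : P u -> P (c *: u).
Proof. by case: stableP => _ _ H *; apply: H. Qed.

Lemma stable_actd f i u : P u -> P (actd f i u).
Proof. by case: stableP => _ _ _ H *; apply: H. Qed.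

Lemma stable_actD f i u : P u -> P (actD f i u).
Proof. by case: stableP => _ _ _ _ H; apply: H. Qed.

Lemma stableB u v : P u -> P v -> P (u - v).
Proof. by move=> Pu Pv; apply: stableD => //; rewrite -scaleN1r; apply: stableZ. Qed.

Lemma stableDl u v : P u -> P (u + v) -> P v.
Proof. by move=> Pu /stableB /(_ Pu); rewrite addrC addKr. Qed.

Lemma stableZ_inv (c : F) u : c != 0 -> P (c *: u) -> P u.
Proof. by move=> c0 /(stableZ c^-1); rewrite scalerA mulVf // scale1r. Qed.

Lemma stable_sum (I : Type) (r : seq I) (A : pred I) (f : I -> V) :
  (forall i, A i -> P (f i)) -> P (\sum_(i <- r | A i) f i).
Proof.
by move=> Pf; apply: (big_ind P) => //; [exact: stable0 | exact: stableD].
Qed.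

Lemma stable_bvec (c : F) g w : P (bvec 1 g w) -> P (bvec c g w).
Proof. by move=> P1; rewrite bvecZ; apply: stableZ. Qed.

Lemma stable_sum_collapse (I : finType) (A : pred I) (x : I -> V) (y : V)
    (a d : I -> F) (lam : F) :
  (forall t, A t -> P (x t - d t *: y)) -> (forall t, A t -> a t * d t = lam) ->
  P (\sum_(t | A t) a t *: x t) -> P ((lam *+ #|A|) *: y).
Proof.
move=> Pxy ad Pax.
have Pdiff : P (\sum_(t | A t) a t *: (x t - d t *: y)).
  by apply: stable_sum => t At; apply/stableZ/Pxy.
have := stableB Pax Pdiff; rewrite -sumrB.
rewrite (eq_bigr (fun=> lam *: y)) ?sumr_const ?scalerMnl // => t At.
by rewrite scalerBr opprB addrC subrK scalerA ad.
Qed.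

End StableSubspace.

Lemma signr_telescope (R : pzRingType) (p : bool) (t k : nat) : (t <= k)%N ->
  (-1) ^+ (~~ p && odd t) * - (-1) ^+ (~~ p) * (- (-1) ^+ p) ^+ (k - t)
  = (if p then -1 else (-1) ^+ k) :> R.
Proof.
case: p => /= tk; first by rewrite !expr0 mul1r opprK expr1n mulr1.
by rewrite expr1 opprK mulr1 signr_odd -exprD subnKC.
Qed.

Section Generation.
Variables (F : fieldType) (m n q : nat).
Hypothesis charF0 : [pchar F] =i pred0.
Local Notation V := (Vsp F m n q).
Local Notation Rmon := (Rmon m n).
Local Notation word := (word m n q).
Variable P : V -> Prop.
Hypothesis stableP : W_stable_subspace P.
Hypothesis P_kerel :
  forall g (w : word) (k l : 'I_q), val l = (val k).+1 -> P (kerel F g w k l).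
Variables (s0 : 'I_n) (i0 : 'I_m).
Local Notation c := (yI m s0).
Local Notation cword := ([tuple of nseq q c] : word).
Hypothesis P_v0 : P (bvec 1 (ymon m s0) cword).

Lemma natr_succ_neq0 k : (k.+1%:R : F) != 0.
Proof. by have /pcharf0P -> := charF0. Qed.

Lemma cword_neq_xI (i : 'I_m) t : tnth cword t != xI n i.
Proof. by rewrite tnth_nseq yI_neq_xI. Qed.

Lemma cword_neq_yI (s : 'I_n) t : s != s0 -> tnth cword t != yI m s.
Proof. by rewrite tnth_nseq; apply: contra => /eqP/rshift_inj ->. Qed.

Lemma stable_oddmon_cword (S : {set 'I_n}) :
  P (bvec 1 ([ffun => 0%N], S) cword).
Proof.
move: {2}#|S :\ s0| (erefl #|S :\ s0|) => k; elim: k S => [|k IH] S.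
  move/eqP; rewrite cards_eq0 setD_eq0 subset1 => /orP [] /eqP ->.
    exact: P_v0.
  by have := stable_actD stableP (Rone m n) s0 P_v0; rewrite actD_Rone_ymon.
move=> Sk; have /set0Pn [s] : S :\ s0 != set0 by rewrite -card_gt0 Sk.
rewrite !inE => /andP [ss0 sS].
have Ss : s \notin S :\ s by rewrite !inE eqxx.
have /IH Ps : #|(S :\ s) :\ s0| = k.
  move: Sk; rewrite (cardsD1 s (S :\ s0)) !inE ss0 sS add1n => -[<-].
  by rewrite !setDDl setUC.
have [e e0 mul_ys] := Rmul_ymon F [ffun _ : 'I_m => 0%N] Ss.
have := stable_actd stableP (xymon i0 s) i0 Ps.
rewrite actd_xymon; first last.
- by move=> t; apply: cword_neq_yI.
- exact: cword_neq_xI.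
- by rewrite ffunE.
by rewrite mul_ys (setD1K sS); apply: (stableZ_inv stableP e0).
Qed.

Lemma stable_cword (g : Rmon) : P (bvec 1 g cword).
Proof.
case: g => a S.
pose a_ j := [ffun l : 'I_m => if (l < j)%N then a l else 0%N].
have a_m : a_ m = a by apply/ffunP => l; rewrite !ffunE ltn_ord.
suff Pa j : (j <= m)%N -> P (bvec 1 (a_ j, S) cword) by rewrite -a_m; apply: Pa.
elim: j => [|j IH] jm.
  have -> : a_ 0%N = [ffun => 0%N] by apply/ffunP => l; rewrite !ffunE.
  exact: stable_oddmon_cword.
pose i := Ordinal jm.
have a_S : [ffun l => (if l == i then a i else 0%N) + (a_ j, S).1 l] = a_ j.+1.
  apply/ffunP => l; rewrite !ffunE ltnS.
  have [->|li] := eqVneq l i; first by rewrite /= ltnn leqnn addr0.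
  rewrite /= add0r; case: ltngtP => // lj.
  by case/eqP: li; apply: val_inj.
have := stable_actd stableP (xpow n i (a i).+1) i (IH (ltnW jm)).
rewrite actd_xpow; first last.
- exact: cword_neq_xI.
- by rewrite ffunE ltnn.
by rewrite a_S; apply: (stableZ_inv stableP (natr_succ_neq0 _)).
Qed.

Definition cprefix (k : nat) (w : word) :=
  forall j : 'I_q, (j < k)%N -> tnth w j = c.

Lemma stable_kerel_shift (v : word) (t t' : 'I_q) (b : 'I_(m + n)) (g : Rmon) :
  val t' = (val t).+1 -> tnth v t = c -> tnth v t' = c ->
  P (bvec 1 g (wset v t b) + (-1) ^+ ipar b *: bvec 1 g (wset v t' b)).
Proof.
move=> tt' vt vt'; have := P_kerel g (wset v t b) tt'.
have t't : t' != t by rewrite -val_eqE tt' (gtn_eqF (ltnSn _)).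
rewrite /kerel !tnth_wset eqxx (negPf t't) vt' ipar_yI andbT.
by rewrite wswap_wset ?vt ?vt' // -bvecZ.
Qed.

Lemma stable_kerel_chain (v : word) (b : 'I_(m + n)) (g : Rmon) (d : nat) :
  forall t k : 'I_q, (val t + d = k)%N ->
  (forall j : 'I_q, (t <= j <= k)%N -> tnth v j = c) ->
  P (bvec 1 g (wset v t b) - (- (-1) ^+ ipar b) ^+ d *: bvec 1 g (wset v k b)).
Proof.
elim: d => [|d IH] t k tdk vc.
  rewrite addn0 in tdk; rewrite (val_inj tdk) expr0 scale1r subrr.
  exact: (stable0 stableP).
have t'q : (t.+1 < q)%N.
  by apply: leq_ltn_trans (ltn_ord k); rewrite -tdk addnS ltnS leq_addr.
pose t' := Ordinal t'q.
have tk : (t' <= k)%N by rewrite -tdk /= addnS ltnS leq_addr.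
have vt : tnth v t = c by apply: vc; rewrite leqnn (leq_trans (leqnSn _) tk).
have vt' : tnth v t' = c by apply: vc; rewrite leqnSn tk.
have Pt'k := IH t' k (etrans (addSnnS _ _) tdk).
have /Pt'k {}Pt'k : forall j : 'I_q, (t' <= j <= k)%N -> tnth v j = c.
  by move=> j /andP [t'j jk]; apply: vc; rewrite jk (leq_trans (leqnSn _) t'j).
have Ptt' := stable_kerel_shift (t' := t') b g erefl vt vt'.
have := stableB stableP Ptt' (stableZ stableP ((-1) ^+ ipar b) Pt'k).
by rewrite scalerBr opprD opprK addrA addrK scalerA exprS mulNr scaleNr opprK.
Qed.

Lemma stable_xiV_c (b : 'I_(m + n)) (g : Rmon) (v : word) :
  (forall g', P (bvec 1 g' v)) -> P (xiV c b (1, g) v).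
Proof.
move=> Pv; have sign_neq0 k : (-1) ^+ k != 0 :> F by rewrite signr_eq0.
have [bm|bm] := ltnP b m.
  have -> : b = xI n (Ordinal bm) by apply: val_inj.
  have := stable_actd stableP (ymon m s0) (Ordinal bm) (Pv g).
  rewrite actd_ymon => /(stableDl stableP (stable_bvec stableP _ (Pv _))).
  exact: (stableZ_inv stableP (sign_neq0 _)).
have bn : (b - m < n)%N by rewrite ltn_subLR // -(ltn_ord b).
have -> : b = yI m (Ordinal bn) by apply: val_inj; rewrite /= subnKC.
have := stable_actD stableP (ymon m s0) (Ordinal bn) (Pv g).
rewrite actD_ymon => /(stableDl stableP (stable_bvec stableP _ (Pv _))).
exact: (stableZ_inv stableP (sign_neq0 _)).
Qed.

Lemma sum_ipar_cprefix (v : word) (t : nat) : (t <= q)%N -> cprefix t v ->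
  (\sum_(l < q | (l < t)%N) ipar (tnth v l))%N = t.
Proof.
move=> tq vt; rewrite (eq_bigr (fun=> 1%N)) => [|l lt].
  by rewrite (big_ord_narrow tq) sum1_card card_ord.
by rewrite vt ?ipar_yI.
Qed.

(* Modulo words with a longer c-prefix, xi(E_cb) only replaces one of the
   first k+1 letters c of v by b. *)
Lemma stable_xiV_head (k : 'I_q) (v : word) (b : 'I_(m + n)) (g : Rmon) :
  b != c -> (forall j : 'I_q, (j <= k)%N -> tnth v j = c) ->
  (forall g' (w' : word), cprefix k.+1 w' -> P (bvec 1 g' w')) ->
  P (\sum_(t < q | (t <= k)%N)
       ((-1) ^+ (~~ ipar b && odd t) * - (-1) ^+ (~~ ipar b))
       *: bvec 1 g (wset v t b)).
Proof.
move=> bc vc IH; have /(stable_xiV_c b g) : forall g', P (bvec 1 g' v).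
  by move=> g'; apply: IH => j; rewrite ltnS; apply: vc.
pose a (t : nat) : F := (-1) ^+ (~~ ipar b && odd t) * - (-1) ^+ (~~ ipar b).
rewrite /xiV str_neq 1?eq_sym // bvec0 addr0 scale1r.
rewrite (bigID (fun t : 'I_q => (t <= k)%N)) /= addrC.
rewrite [X in _ + X](eq_bigr (fun t : 'I_q => a t *: bvec 1 g (wset v t b))).
  apply: (stableDl stableP); apply: (stable_sum stableP) => t; rewrite -ltnNge => kt.
  case: ifP => _; last exact: (stable0 stableP).
  apply/(stable_bvec stableP)/IH => j jk; rewrite tnth_wset -val_eqE.
  by rewrite (ltn_eqF (leq_trans jk kt)); apply: vc; rewrite -ltnS.
move=> t tk.
have tq : (t <= q)%N by apply: ltnW (leq_ltn_trans tk (ltn_ord k)).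
have vt : cprefix t v by move=> l lt; apply/vc/ltnW/(leq_trans lt tk).
by rewrite (vc t tk) eqxx ipar_yI (sum_ipar_cprefix tq vt) andbT -bvecZ.
Qed.

Lemma stable_word_step (k : 'I_q) (w : word) (g : Rmon) :
  (forall g' (w' : word), cprefix k.+1 w' -> P (bvec 1 g' w')) ->
  cprefix k w -> P (bvec 1 g w).
Proof.
move=> IH wk; set b := tnth w k.
have [bc|bc] := eqVneq b c.
  apply: IH => j; rewrite ltnS leq_eqVlt => /orP [/eqP jk|]; last exact: wk.
  by rewrite (_ : j = k) //; apply: val_inj.
pose v := wset w k c.
have vc (j : 'I_q) : (j <= k)%N -> tnth v j = c.
  rewrite tnth_wset; case: eqVneq => // jk jk'; apply: wk.
  by rewrite ltn_neqAle jk' andbT.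
pose lam : F := if ipar b then -1 else (-1) ^+ k.
pose A := [pred t : 'I_q | (t <= k)%N].
have lam_neq0 : lam *+ #|A| != 0.
  have A_gt0 : (0 < #|A|)%N by apply/card_gt0P; exists k; rewrite inE.
  rewrite -mulr_natr; apply: mulf_neq0.
    by rewrite /lam; case: ifP; rewrite ?oppr_eq0 ?oner_eq0 ?signr_eq0.
  by rewrite -(prednK A_gt0) natr_succ_neq0.
apply: (stableZ_inv stableP lam_neq0).
apply: (stable_sum_collapse stableP
         (d := fun t : 'I_q => (- (-1) ^+ ipar b) ^+ (k - t))).
- move=> t tk; rewrite -[in bvec 1 g w](wsetK w k c).
  apply: stable_kerel_chain; first exact: subnKC.
  by move=> j /andP [_ jk]; apply: vc.
- by move=> t tk; apply: signr_telescope.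
exact: stable_xiV_head.
Qed.

Lemma stable_cprefix d : (d <= q)%N ->
  forall g (w : word), cprefix (q - d) w -> P (bvec 1 g w).
Proof.
elim: d => [|d IH] dq g w.
  rewrite subn0 => wq; have -> : w = cword.
    by apply: eq_from_tnth => j; rewrite tnth_nseq wq.
  exact: stable_cword.
have kq : (q - d.+1 < q)%N by rewrite -subn_gt0 subKn // ltnW.
have kd : (Ordinal kq).+1 = (q - d)%N by rewrite /= -(subSn dq) subSS.
apply: (stable_word_step (k := Ordinal kq)) => g' w' w'k.
by apply: (IH (ltnW dq)); rewrite -kd.
Qed.

Lemma stable_basis g (w : word) : P (bvec 1 g w).
Proof. by apply: (stable_cprefix (leqnn q)) => j; rewrite subnn ltn0. Qed.

End Generation.

Definition ylast (n : nat) (Hn : (0 < n)%N) : 'I_n :=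
  Ordinal (eq_leq (prednK Hn)).

Lemma gen_vecE (F : fieldType) (m n q : nat) (Hn : (0 < n)%N) :
  gen_vec F m q Hn =
  bvec 1 (ymon m (ylast Hn)) [tuple of nseq q (yI m (ylast Hn))].
Proof.
rewrite /gen_vec /ymon.
have -> : [set s : 'I_n | val s == n.-1] = [set ylast Hn].
  by apply/setP => s; rewrite !inE.
(* qualified: seq.v also exports a lemma named lastI *)
have -> : Defs.lastI m Hn = yI m (ylast Hn).
  by apply: val_inj; rewrite /= -!subn1 addnBA.
reflexivity.
Qed.

Theorem mainTheorem10 (F : closedFieldType) (HF : [pchar F]%R =i pred0)
  (m n : nat) (Hm : (0 < m)%N) (Hn : (0 < n)%N) (q : nat) :
  generates_Vtheta (gen_vec F m q Hn).
Proof.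
move=> P stableP P_kerel P_v0 v.
rewrite (monalgE v); apply: (stable_sum stableP) => -[g w] _.
apply: (stable_bvec stableP).
rewrite gen_vecE in P_v0.
exact: (stable_basis HF stableP P_kerel (Ordinal Hm) P_v0).
Qed.
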